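(* There exists a two-way optical interference automaton (2OIA) that recognizes the language $\{a^nb^{n^2}\mid n\in\mathbb{N}\}$ in $O(|w|^3)$ time, where $|w|$ is the length of the input $w$.
   Context: A two-way optical interference automaton (2OIA) is a deterministic machine with finite state set $Q$, start state $q_0$, accepting and rejecting states, finite input alphabet $\Sigma$, and tape alphabet $\Gamma=\Sigma\cup\{\text{¢},\$\}$. On input $w=w_1\cdots w_n$ the read-only tape holds ¢$w_1\cdots w_n\$$ in cells $0,1,\dots,n+1$, scanned by a two-way head. For each cell $m$ there is a monochromatic point light source at the point $(m,0)$ of the plane; all sources have the same wavelength $\lambda$ and the same initial amplitude $A_0$, and each source is at any moment either switched off or switched on with initial phase $0$ or $\pi$. A detector is located at a grid point $(j,k)$ with $j,k\in\{0,\tfrac12,1,\tfrac32,\dots,n+1\}$, pointing towards the source array; its field of vision is the cone making angle $\pi/4$ with the vertical line through it, so it sees exactly the sources at $(m,0)$ with $|m-j|\le k$. The resultant wave at the detector is $\sum A_0 r_m^{-1}e^{i(\phi_m+2\pi r_m/\lambda)}$, summed over the switched-on sources it sees, where $r_m$ is the distance from the source to the detector and $\phi_m\in\{0,\pi\}$ the source's phase; the detector outputs $\underline{1}$ if this resultant is nonzero and $\underline{0}$ otherwise. The transition function $\delta:Q\times\Gamma\times\{\underline0,\underline1\}\to Q\times\{\text{left},\text{right},\text{stay}\}\times\{\text{left},\text{right},\text{up},\text{down},\text{stay}\}\times\{\mathrm{toggle}(0),\mathrm{toggle}(\pi),-\}$ maps (state, scanned symbol, detector output) to a new state, a move of the head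 by one cell, a move of the detector by one grid step (of length $1/2$), and an action on the source of the currently scanned cell: $\mathrm{toggle}(\phi)$ switches it on with phase $\phi$ if it is off and switches it off if it is on; $-$ does nothing. Initially all sources are off, the machine is in $q_0$, the head is on cell $0$, and the detector is at a prescribed initial grid position. For a given source, a maximal sequence of toggles at consecutive time steps is called non-transient if its length is odd; there is a constant $k$ such that the machine crashes if it attempts a non-transient toggle sequence on a single source for the $(k+1)$-th time. The machine accepts when it is in an accepting state with detector output $\underline0$. Its running time is the total number of moves made by the head plus the number of moves made by the detector. A 2OIA recognizes a language $L$ if it accepts every input in $L$ and rejects every input not in $L$. *)

From Stdlib Require Import Bool Reals ZArith List Lia.

Set Implicit Arguments.

Inductive sym : Type := sa | sb.

Inductive tsym : Type := LEnd | REnd | Sym (x : sym).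

Inductive hmove : Type := HLeft | HRight | HStay.
Inductive dmove : Type := DLeft | DRight | DUp | DDown | DStay.
Inductive action : Type := Toggle0 | TogglePi | NoAct.
Inductive srcst : Type := Off | On0 | OnPi.

(** Detector outputs are booleans:
    [false] = 0, [true] = 1.  Positions of the detector are stored in
    half-units: the grid point (j,k) is stored as (J,K) = (2j,2k).
    The prescribed initial detector position (in half-units) is
    [det_dJ * (n+1) + det_cJ], [det_dK * (n+1) + det_cK] with
    [det_dJ, det_dK ∈ {0,1,2}] (i.e. anchored at 0, the middle, or the right
    end / top of the grid) and fixed integer offsets. *)
Record OIA : Type := {
  Q : Type;
  Q_finite : exists l : list Q, forall q, In q l;
  q0 : Q;
  acc : Q -> bool;
  rej : Q -> bool;
  acc_rej_disj : forall q, acc q = true -> rej q = false;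
  delta : Q -> tsym -> bool -> Q * hmove * dmove * action;
  lambda : R;
  lambda_pos : (0 < lambda)%R;
  A0 : R;
  A0_pos : (0 < A0)%R;
  kcrash : nat;
  det_dJ : nat;
  det_dJ_le : (det_dJ <= 2)%nat;
  det_cJ : Z;
  det_dK : nat;
  det_dK_le : (det_dK <= 2)%nat;
  det_cK : Z
}.

(** Tape contents ¢ w $ : cell 0 is ¢, cells 1..n hold w, cell n+1 is $. *)
Definition tape (w : list sym) (m : nat) : tsym :=
  if Nat.eqb m 0 then LEnd
  else if Nat.leb m (length w) then Sym (nth (m - 1) w sa) else REnd.

Record config (M : OIA) : Type := mkcfg {
  st : Q M;
  head : nat;
  detJ : nat;
  detK : nat;
  src : nat -> srcst;
  cnt : nat -> nat;           (* number of completed non-transient toggle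
                                 sequences performed on each source *)
  run : option (nat * nat);   (* toggle sequence in progress: (source, length) *)
  time : nat                  (* head moves + detector moves so far *)
}.
Arguments mkcfg {M}.

Definition phase (s : srcst) : R := match s with OnPi => PI | _ => 0%R end.
Definition is_on (s : srcst) : bool := match s with Off => false | _ => true end.

Definition sees (J K m : nat) : bool :=
  Z.leb (Z.abs (2 * Z.of_nat m - Z.of_nat J)) (Z.of_nat K).

Definition dist (J K m : nat) : R :=
  sqrt (((2 * INR m - INR J) / 2) ^ 2 + (INR K / 2) ^ 2).

Definition rsum (f : nat -> R) (l : list nat) : R :=
  fold_right (fun m acc => (f m + acc)%R) 0%R l.

(** real and imaginary parts of  sum A0 r^-1 exp(i (phi + 2 pi r / lambda))
    over the switched-on sources seen by the detector (cells 0..n+1). *)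
Definition res_re (lam a0 : R) (n J K : nat) (s : nat -> srcst) : R :=
  rsum (fun m => if sees J K m && is_on (s m)
                 then (a0 / dist J K m * cos (phase (s m) + 2 * PI * dist J K m / lam))%R
                 else 0%R) (seq 0 (n + 2)).
Definition res_im (lam a0 : R) (n J K : nat) (s : nat -> srcst) : R :=
  rsum (fun m => if sees J K m && is_on (s m)
                 then (a0 / dist J K m * sin (phase (s m) + 2 * PI * dist J K m / lam))%R
                 else 0%R) (seq 0 (n + 2)).

(** Convention for the degenerate case: a switched-on source located exactly
    at the detector (distance 0, infinite amplitude) makes the output 1. *)
Definition singular (n J K : nat) (s : nat -> srcst) : bool :=
  existsb (fun m => sees J K m && is_on (s m) && Nat.eqb K 0 && Nat.eqb J (2 * m))
          (seq 0 (n + 2)).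

Definition Rneq0b (x : R) : bool := if Req_EM_T x 0 then false else true.

Definition output (M : OIA) (n : nat) (c : config M) : bool :=
  singular n (detJ c) (detK c) (src c)
  || Rneq0b (res_re (lambda M) (A0 M) n (detJ c) (detK c) (src c))
  || Rneq0b (res_im (lambda M) (A0 M) n (detJ c) (detK c) (src c)).

Definition toggle (a : action) (s : srcst) : srcst :=
  match a, s with
  | NoAct, _ => s
  | Toggle0, Off => On0
  | TogglePi, Off => OnPi
  | _, _ => Off
  end.

Definition upd {A : Type} (f : nat -> A) (m : nat) (v : A) : nat -> A :=
  fun x => if Nat.eqb x m then v else f x.

(** A maximal toggle sequence (m, l) ends: if l is odd it is non-transient
    and is counted; the (k+1)-th one on the same source crashes (None). *)
Definition end_run (k : nat) (ct : nat -> nat) (r : option (nat * nat))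
  : option (nat -> nat) :=
  match r with
  | None => Some ct
  | Some (m, l) =>
      if Nat.odd l then
        if Nat.leb (S (ct m)) k then Some (upd ct m (S (ct m))) else None
      else Some ct
  end.

Definition move_head (n h : nat) (hm : hmove) : option nat :=
  match hm with
  | HLeft => match h with 0 => None | S h' => Some h' end
  | HRight => if Nat.ltb h (S n) then Some (S h) else None
  | HStay => Some h
  end.

Definition move_det (n J K : nat) (dm : dmove) : option (nat * nat) :=
  match dm with
  | DLeft => match J with 0 => None | S J' => Some (J', K) end
  | DRight => if Nat.ltb J (2 * (n + 1)) then Some (S J, K) else None
  | DDown => match K with 0 => None | S K' => Some (J, K') end
  | DUp => if Nat.ltb K (2 * (n + 1)) then Some (J, S K) else None
  | DStay => Some (J, K)
  end.

Definition halted (M : OIA) (c : config M) : bool := acc M (st c) || rej M (st c).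

Definition is_toggle (a : action) : bool :=
  match a with NoAct => false | _ => true end.

Definition step (M : OIA) (w : list sym) (c : config M) : option (config M) :=
  if halted c then Some c else
  let n := length w in
  let h := head c in
  match delta M (st c) (tape w h) (output n c) with
  | (q', hm, dm, a) =>
    let bk :=
      if is_toggle a then
        match run c with
        | Some (m, l) =>
            if Nat.eqb m h then (Some (cnt c), Some (m, S l))
            else (end_run (kcrash M) (cnt c) (run c), Some (h, 1))
        | None => (Some (cnt c), Some (h, 1))
        end
      else (end_run (kcrash M) (cnt c) (run c), None) in
    match bk with
    | (None, _) => None
    | (Some ct', run') =>
      match move_head n h hm, move_det n (detJ c) (detK c) dm with
      | Some h', Some (J', K') =>
          Some (mkcfg q' h' J' K' (upd (src c) h (toggle a (src c h))) ct' run'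
                  (time c + (match hm with HStay => 0 | _ => 1 end)
                          + (match dm with DStay => 0 | _ => 1 end)))
      | _, _ => None
      end
    end
  end.

Definition init (M : OIA) (w : list sym) : option (config M) :=
  let n := length w in
  let J := (Z.of_nat (det_dJ M * (n + 1)) + det_cJ M)%Z in
  let K := (Z.of_nat (det_dK M * (n + 1)) + det_cK M)%Z in
  if (Z.leb 0 J && Z.leb J (Z.of_nat (2 * (n + 1)))
      && Z.leb 0 K && Z.leb K (Z.of_nat (2 * (n + 1))))%bool
  then Some (mkcfg (q0 M) 0 (Z.to_nat J) (Z.to_nat K) (fun _ => Off) (fun _ => 0) None 0)
  else None.

Fixpoint run_steps (M : OIA) (w : list sym) (t : nat) : option (config M) :=
  match t with
  | 0 => init M w
  | S t' => match run_steps M w t' with Some c => step w c | None => None end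
  end.

Definition final (M : OIA) (w : list sym) (c : config M) : Prop :=
  exists t, run_steps M w t = Some c /\ halted c = true.

(** the pending toggle sequence also ends when the machine halts *)
Definition no_final_crash (M : OIA) (c : config M) : Prop :=
  exists ct, end_run (kcrash M) (cnt c) (run c) = Some ct.

Definition accepts (M : OIA) (w : list sym) : Prop :=
  exists c : config M, final w c /\ no_final_crash c /\
            acc M (st c) = true /\ output (length w) c = false.

Definition rejects (M : OIA) (w : list sym) : Prop :=
  exists c : config M, final w c /\ no_final_crash c /\
            (acc M (st c) = false \/ output (length w) c = true).

Definition recognizes (M : OIA) (L : list sym -> Prop) : Prop :=
  forall w, (L w -> accepts M w) /\ (~ L w -> rejects M w).

Definition runs_within (M : OIA) (w : list sym) (T : nat) : Prop :=
  exists c : config M, final w c /\ time c <= T.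

Definition L_anbn2 (w : list sym) : Prop :=
  exists n : nat, w = repeat sa n ++ repeat sb (n * n).

(* The machine never lifts its detector off the source line: there it sees
   only the source beneath it, at distance 0, so its output is just the on/off
   state of that source, and the sources become a rewritable bit per cell.
   A first sweep checks that the input is a^p b^q and switches on the sources
   of the a-cells.  While r a-cells are still on, a round marks 2r - 1 further
   b-cells from the right end (the detector, parked over cell r, counts down
   to cell 0 while the head marks two cells per step) and switches cell r off.
   Since r^2 - (r - 1)^2 = 2r - 1, the p rounds mark exactly p^2 b-cells, and
   the input is accepted iff they are all the b-cells.  A round costs O(n)
   moves, so the whole run costs O(n^2); no source is toggled more than twice,
   nor twice in a row. *)

From Stdlib Require Import Reals ZArith List Lia Bool.
Import ListNotations.

Section Runs.
Context {M : OIA} (w : list sym).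

Fixpoint steps (c : config M) (t : nat) : option (config M) :=
  match t with
  | 0 => Some c
  | S t' => match step w c with Some c1 => steps c1 t' | None => None end
  end.

Lemma steps_add c t1 c1 t2 :
  steps c t1 = Some c1 -> steps c (t1 + t2) = steps c1 t2.
Proof.
  revert c; induction t1 as [|t1 IH]; intros c H; simpl in *.
  - congruence.
  - destruct (step w c); [apply IH, H | discriminate].
Qed.

Lemma run_steps_add t1 c t2 c' :
  run_steps M w t1 = Some c -> steps c t2 = Some c' -> run_steps M w (t1 + t2) = Some c'.
Proof.
  revert t1 c; induction t2 as [|t2 IH]; intros t1 c H1 H2; simpl in *.
  - rewrite Nat.add_0_r. congruence.
  - destruct (step w c) as [c1|] eqn:E; [|discriminate].
    replace (t1 + S t2) with (S t1 + t2) by lia.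
    apply IH with c1; [simpl; rewrite H1|]; assumption.
Qed.

Definition reach (c : config M) (t : nat) (P : config M -> Prop) : Prop :=
  exists t' c', t' <= t /\ steps c t' = Some c' /\ P c'.

Lemma reach_now c t (P : config M -> Prop) : P c -> reach c t P.
Proof. intros H. exists 0, c. repeat split; [lia | assumption]. Qed.

Lemma reach_le c t t' (P : config M -> Prop) : reach c t P -> t <= t' -> reach c t' P.
Proof. intros (s & c' & Hs & H1 & H2) Ht. exists s, c'. repeat split; [lia | assumption..]. Qed.

Lemma reach_weaken c t t' (P P' : config M -> Prop) :
  reach c t P -> t <= t' -> (forall c', P c' -> P' c') -> reach c t' P'.
Proof. intros (s & c' & Hs & H1 & H2) Ht HP. exists s, c'. repeat split; auto; lia. Qed.

Lemma reach_step c c1 t (P : config M -> Prop) :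
  step w c = Some c1 -> 0 < t -> reach c1 (t - 1) P -> reach c t P.
Proof.
  intros H1 Ht (s & c' & Hs & H2 & H3). exists (S s), c'.
  split; [lia|]. split; [simpl; rewrite H1; exact H2 | exact H3].
Qed.

Lemma reach_cont c t1 t (Q P : config M -> Prop) :
  reach c t1 Q -> t1 <= t -> (forall c1, Q c1 -> reach c1 (t - t1) P) -> reach c t P.
Proof.
  intros (s1 & c1 & Hs1 & H1 & HQ) Ht K.
  destruct (K c1 HQ) as (s2 & c2 & Hs2 & H2 & HP).
  exists (s1 + s2), c2. split; [lia|].
  split; [rewrite (steps_add _ _ _ s2 H1); exact H2 | exact HP].
Qed.

Lemma step_time_le (c c' : config M) : step w c = Some c' -> time c' <= time c + 2.
Proof.
  unfold step. destruct (halted c).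
  - intros H; injection H; intros; subst; lia.
  - cbv zeta. destruct (delta M (st c) (tape w (head c)) (output (length w) c))
      as [[[q' hm] dm] a].
    match goal with |- (match ?b with _ => _ end) = _ -> _ => destruct b as [[ct'|] r'] end;
      [|discriminate].
    destruct (move_head (length w) (head c) hm); [|discriminate].
    destruct (move_det (length w) (detJ c) (detK c) dm) as [[J' K']|]; [|discriminate].
    intros H; injection H; intros; subst; simpl.
    destruct hm, dm; simpl; lia.
Qed.

Lemma run_steps_time_le t (c : config M) : run_steps M w t = Some c -> time c <= 2 * t.
Proof.
  revert c; induction t as [|t IH]; intros c H; simpl in H.
  - unfold init in H. destruct (_ && _)%bool; inversion H; subst; simpl; lia.
  - destruct (run_steps M w t) as [c0|] eqn:E; [|discriminate].
    apply step_time_le in H. specialize (IH c0 eq_refl). lia.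
Qed.

Lemma final_of_reach c0 T (P : config M -> Prop) :
  init M w = Some c0 -> reach c0 T (fun c => halted c = true /\ P c) ->
  exists c, final w c /\ time c <= 2 * T /\ P c.
Proof.
  intros H0 (t & c & Ht & Hs & Hh & HP).
  assert (Hr : run_steps M w (0 + t) = Some c) by (eapply run_steps_add; eassumption).
  exists c. split; [exists t; auto|]. split; [|exact HP].
  apply run_steps_time_le in Hr. lia.
Qed.

End Runs.

Definition decides {M : OIA} (w : list sym) (b : Prop) (c : config M) : Prop :=
  no_final_crash c /\
  (b -> acc M (st c) = true /\ output (length w) c = false) /\
  (~ b -> acc M (st c) = false \/ output (length w) c = true).

Lemma recognizes_of_decides (M : OIA) (L : list sym -> Prop) :
  (forall w, exists c : config M, final w c /\ decides w (L w) c) -> recognizes M L.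
Proof.
  intros H w. destruct (H w) as (c & Hf & Hn & HA & HR). split.
  - intros HL. exists c. destruct (HA HL). auto.
  - intros HL. exists c. auto.
Qed.

(** * A detector on the source line *)

Lemma sees_ground m m' : sees (2 * m) 0 m' = Nat.eqb m' m.
Proof.
  unfold sees. destruct (Nat.eqb_spec m' m).
  - apply Z.leb_le. lia.
  - apply Z.leb_gt. lia.
Qed.

Lemma rsum_eq0 f l : (forall x, In x l -> f x = 0%R) -> rsum f l = 0%R.
Proof.
  induction l as [|a l IH]; simpl; intros H; [reflexivity|].
  rewrite H, IH by auto. ring.
Qed.

Lemma Rneq0b_0 : Rneq0b 0 = false.
Proof. unfold Rneq0b. destruct (Req_EM_T 0 0); congruence. Qed.

(* Relies on the [singular] convention for a source at distance 0. *)
Lemma output_ground {M : OIA} n (c : config M) m :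
  detJ c = 2 * m -> detK c = 0 -> m <= n + 1 -> output n c = is_on (src c m).
Proof.
  intros HJ HK Hm. unfold output. rewrite HJ, HK.
  destruct (is_on (src c m)) eqn:Hon.
  - replace (singular _ _ _ _) with true; [reflexivity|]. symmetry.
    apply existsb_exists. exists m. split; [apply in_seq; lia|].
    rewrite sees_ground, Nat.eqb_refl, Hon. apply Nat.eqb_refl.
  - assert (Hoff : forall m', sees (2 * m) 0 m' && is_on (src c m') = false).
    { intros m'. rewrite sees_ground.
      destruct (Nat.eqb_spec m' m); [subst; exact Hon | reflexivity]. }
    replace (singular _ _ _ _) with false.
    + unfold res_re, res_im. rewrite !rsum_eq0, Rneq0b_0; [reflexivity | |];
        intros m' _; rewrite Hoff; reflexivity.
    + symmetry. apply not_true_is_false. intros Hs.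
      apply existsb_exists in Hs. destruct Hs as (m' & _ & Hs).
      rewrite Hoff in Hs. discriminate.
Qed.

Section GroundDetector.
Context {M : OIA} (w : list sym).

Definition pending (r : option (nat * nat)) (m : nat) : nat :=
  match r with Some (m', l) => if Nat.eqb m m' then l else 0 | None => 0 end.

(* [tog m] counts the non-transient toggle sequences of source [m], including a
   pending one; every toggle is followed by a head move, so a pending sequence
   has length 1 and lies on another cell than the head. *)
Definition cfg_inv (c : config M) (x : Q M) (h J : nat)
    (lit : nat -> bool) (tog : nat -> nat) : Prop :=
  st c = x /\ head c = h /\ detJ c = J /\ detK c = 0 /\
  (forall m, src c m = if lit m then On0 else Off) /\
  (forall m, cnt c m + pending (run c) m = tog m) /\
  (run c = None \/ exists m, run c = Some (m, 1) /\ m <> h) /\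
  (forall m, tog m <= kcrash M).

Lemma cfg_inv_ext c x h J lit tog lit' tog' :
  cfg_inv c x h J lit tog -> (forall m, lit m = lit' m) -> (forall m, tog m = tog' m) ->
  cfg_inv c x h J lit' tog'.
Proof.
  intros (Hst & Hh & HJ & HK & Hsrc & Hcnt & Hrun & Htog) Hl Ht.
  repeat split; auto; intro m; [rewrite <- Hl | rewrite <- Ht | rewrite <- Ht]; auto.
Qed.

Lemma end_run_cfg_inv {c x h J lit tog} :
  cfg_inv c x h J lit tog ->
  exists ct, end_run (kcrash M) (cnt c) (run c) = Some ct /\ forall m, ct m = tog m.
Proof.
  intros (_ & _ & _ & _ & _ & Hcnt & Hrun & Htog).
  destruct Hrun as [Hr | (m & Hr & _)].
  - exists (cnt c). rewrite Hr. split; [reflexivity|].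
    intros m. rewrite <- Hcnt, Hr. simpl. lia.
  - assert (Hm : cnt c m + 1 = tog m)
      by (rewrite <- Hcnt, Hr; simpl; rewrite Nat.eqb_refl; reflexivity).
    rewrite Hr. unfold end_run. simpl Nat.odd. cbv iota.
    replace (S (cnt c m) <=? kcrash M) with true
      by (symmetry; apply Nat.leb_le; specialize (Htog m); lia).
    eexists; split; [reflexivity|].
    intros m'. rewrite <- Hcnt, Hr. unfold upd. simpl.
    destruct (Nat.eqb_spec m' m); subst; lia.
Qed.

Lemma cfg_inv_no_final_crash {c x h J lit tog} :
  cfg_inv c x h J lit tog -> no_final_crash c.
Proof. intros Hinv. destruct (end_run_cfg_inv Hinv) as (ct & Hct & _). exists ct. exact Hct. Qed.

Lemma output_cfg_inv n c x h m lit tog :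
  cfg_inv c x h (2 * m) lit tog -> m <= n + 1 -> output n c = lit m.
Proof.
  intros (_ & _ & HJ & HK & Hsrc & _) Hm.
  rewrite (output_ground n c m HJ HK Hm), Hsrc. destruct (lit m); reflexivity.
Qed.

Lemma reach_noact c x h J lit tog x' hm dm h' J' t P :
  cfg_inv c x h J lit tog -> acc M x || rej M x = false ->
  delta M x (tape w h) (output (length w) c) = (x', hm, dm, NoAct) ->
  move_head (length w) h hm = Some h' -> move_det (length w) J 0 dm = Some (J', 0) ->
  0 < t -> (forall c', cfg_inv c' x' h' J' lit tog -> reach w c' (t - 1) P) ->
  reach w c t P.
Proof.
  intros Hinv Hx Hd Hmh Hmd Ht K.
  destruct (end_run_cfg_inv Hinv) as (ct & Hct & Hctt).
  destruct Hinv as (Hst & Hh & HJ & HK & Hsrc & _ & _ & Htog).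
  eapply reach_step; [| exact Ht | apply K].
  - unfold step, halted. rewrite Hst, Hx. cbv zeta. rewrite Hh, Hd.
    simpl is_toggle. cbv iota beta. rewrite Hct, Hmh, HJ, HK, Hmd. reflexivity.
  - repeat split; simpl; auto.
    intros m. unfold upd. destruct (Nat.eqb_spec m h); subst; auto.
    intros m. rewrite Hctt. lia.
Qed.

Lemma reach_toggle c x h J lit tog x' hm dm h' J' t P :
  cfg_inv c x h J lit tog -> acc M x || rej M x = false ->
  delta M x (tape w h) (output (length w) c) = (x', hm, dm, Toggle0) ->
  move_head (length w) h hm = Some h' -> move_det (length w) J 0 dm = Some (J', 0) ->
  h' <> h -> S (tog h) <= kcrash M -> 0 < t ->
  (forall c', cfg_inv c' x' h' J' (upd lit h (negb (lit h))) (upd tog h (S (tog h))) ->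
     reach w c' (t - 1) P) ->
  reach w c t P.
Proof.
  intros Hinv Hx Hd Hmh Hmd Hh' Hth Ht K.
  destruct (end_run_cfg_inv Hinv) as (ct & Hct & Hctt).
  destruct Hinv as (Hst & Hh & HJ & HK & Hsrc & Hcnt & Hrun & Htog).
  eapply reach_step; [| exact Ht | apply K].
  - unfold step, halted. rewrite Hst, Hx. cbv zeta. rewrite Hh, Hd.
    simpl is_toggle. cbv iota beta.
    destruct Hrun as [Hr | (m & Hr & Hm)]; rewrite Hr in *.
    + injection Hct as Hct. rewrite Hct, Hmh, HJ, HK, Hmd. reflexivity.
    + destruct (Nat.eqb_spec m h) as [e|_]; [congruence|].
      rewrite Hct, Hmh, HJ, HK, Hmd. reflexivity.
  - repeat split; simpl; auto.
    + intros m. unfold upd. destruct (Nat.eqb_spec m h); [subst m|auto].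
      rewrite Hsrc. destruct (lit h); reflexivity.
    + intros m. rewrite Hctt. unfold upd. destruct (Nat.eqb_spec m h); subst; lia.
    + right. exists h. auto.
    + intros m. unfold upd. destruct (Nat.eqb_spec m h); auto.
Qed.

End GroundDetector.

Inductive state : Type :=
  | qStart | qScanA | qScanB | qRewind | qHome | qRound
  | qSeek | qSeekD | qSeekBack | qCheckB | qFind | qFindD
  | qCountD1 | qCountD2 | qCount | qCount2
  | qRewind2 | qLocateD | qLocate | qLocateBack | qUnmark | qUnmarkD
  | qReturn | qReturnD | qVerify | qVerifyD | qAcc | qRej.

Lemma state_finite : exists l : list state, forall x, In x l.
Proof.
  exists [qStart; qScanA; qScanB; qRewind; qHome; qRound;
          qSeek; qSeekD; qSeekBack; qCheckB; qFind; qFindD;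
          qCountD1; qCountD2; qCount; qCount2;
          qRewind2; qLocateD; qLocate; qLocateBack; qUnmark; qUnmarkD;
          qReturn; qReturnD; qVerify; qVerifyD; qAcc; qRej].
  intros x; destruct x; simpl; tauto.
Qed.

Definition is_accepting (x : state) : bool := match x with qAcc => true | _ => false end.
Definition is_rejecting (x : state) : bool := match x with qRej => true | _ => false end.

Lemma accepting_not_rejecting x : is_accepting x = true -> is_rejecting x = false.
Proof. destruct x; simpl; congruence. Qed.

Definition reject_move : state * hmove * dmove * action := (qRej, HStay, DStay, NoAct).

(* A detector step is half a cell, so moving the detector by one cell takes
   two transitions; the states ...D, ...Back and qHome perform the second. *)
Definition sq_delta (x : state) (s : tsym) (o : bool) : state * hmove * dmove * action :=
  match x with
  | qStart => (qScanA, HRight, DStay, NoAct)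
  | qScanA => match s with
              | Sym sa => (qScanA, HRight, DStay, Toggle0)
              | Sym sb => (qScanB, HRight, DStay, NoAct)
              | REnd => (qRewind, HLeft, DStay, NoAct)
              | LEnd => reject_move end
  | qScanB => match s with
              | Sym sb => (qScanB, HRight, DStay, NoAct)
              | REnd => (qRewind, HLeft, DStay, NoAct)
              | _ => reject_move end
  | qRewind => match s with
               | LEnd => (qHome, HRight, DRight, NoAct)
               | _ => (qRewind, HLeft, DStay, NoAct) end
  | qHome => (qRound, HStay, DRight, NoAct)
  | qRound => if o then (qSeek, HStay, DStay, NoAct) else (qVerify, HStay, DStay, NoAct)
  | qSeek => match s, o with
             | REnd, _ => (qSeekBack, HLeft, DLeft, NoAct)
             | Sym sb, true => (qSeekBack, HLeft, DLeft, NoAct)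
             | _, _ => (qSeekD, HRight, DRight, NoAct) end
  | qSeekD => (qSeek, HStay, DRight, NoAct)
  | qSeekBack => (qCheckB, HStay, DLeft, NoAct)
  | qCheckB => match s with Sym sb => (qFind, HStay, DStay, NoAct) | _ => reject_move end
  | qFind => if o then match s with
                       | Sym sb => (qCountD1, HLeft, DStay, Toggle0)
                       | _ => reject_move end
             else (qFindD, HStay, DLeft, NoAct)
  | qFindD => (qFind, HStay, DLeft, NoAct)
  | qCountD1 => (qCountD2, HStay, DLeft, NoAct)
  | qCountD2 => (qCount, HStay, DLeft, NoAct)
  | qCount => if o then match s with
                        | Sym sb => (qCount2, HLeft, DStay, Toggle0)
                        | _ => reject_move end
              else (qRewind2, HStay, DStay, NoAct)
  | qCount2 => match s with Sym sb => (qCountD1, HLeft, DStay, Toggle0) | _ => reject_move end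
  | qRewind2 => match s with
                | LEnd => (qLocateD, HRight, DRight, NoAct)
                | _ => (qRewind2, HLeft, DStay, NoAct) end
  | qLocateD => (qLocate, HStay, DRight, NoAct)
  | qLocate => match s, o with
               | Sym sa, true => (qLocateD, HRight, DRight, NoAct)
               | _, _ => (qLocateBack, HLeft, DLeft, NoAct) end
  | qLocateBack => (qUnmark, HStay, DLeft, NoAct)
  | qUnmark => (qUnmarkD, HLeft, DLeft, Toggle0)
  | qUnmarkD => (qReturn, HStay, DLeft, NoAct)
  | qReturn => match s with
               | LEnd => (qHome, HRight, DRight, NoAct)
               | _ => (qReturnD, HLeft, DLeft, NoAct) end
  | qReturnD => (qReturn, HStay, DLeft, NoAct)
  | qVerify => match s, o with
               | Sym sa, _ => (qVerifyD, HRight, DRight, NoAct)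
               | Sym sb, true => (qVerifyD, HRight, DRight, NoAct)
               | REnd, _ => (qAcc, HStay, DStay, NoAct)
               | _, _ => reject_move end
  | qVerifyD => (qVerify, HStay, DRight, NoAct)
  | qAcc => (qAcc, HStay, DStay, NoAct)
  | qRej => reject_move
  end.

Definition sq_oia : OIA := {|
  Q := state; Q_finite := state_finite; q0 := qStart;
  acc := is_accepting; rej := is_rejecting; acc_rej_disj := accepting_not_rejecting;
  delta := sq_delta;
  lambda := 1%R; lambda_pos := Rlt_0_1; A0 := 1%R; A0_pos := Rlt_0_1;
  kcrash := 2;
  det_dJ := 0; det_dJ_le := le_0_n 2; det_cJ := 0%Z;
  det_dK := 0; det_dK_le := le_0_n 2; det_cK := 0%Z |}.

Definition rejected (c : config sq_oia) : Prop := st c = qRej /\ no_final_crash c.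
Definition accepted (w : list sym) (c : config sq_oia) : Prop :=
  st c = qAcc /\ output (length w) c = false /\ no_final_crash c.

Lemma cfg_inv_rejected {c : config sq_oia} {h J lit tog} : cfg_inv c qRej h J lit tog -> rejected c.
Proof. intros Hinv. split; [apply Hinv | exact (cfg_inv_no_final_crash Hinv)]. Qed.

Lemma init_cfg_inv w :
  exists c0, init sq_oia w = Some c0 /\ cfg_inv c0 qStart 0 0 (fun _ => false) (fun _ => 0).
Proof.
  unfold init. simpl.
  replace (_ && _)%bool with true
    by (symmetry; repeat (apply andb_true_intro; split); apply Z.leb_le; lia).
  eexists; split; [reflexivity|]. repeat split; simpl; auto; lia.
Qed.

Lemma move_head_right n h h' : h' = S h -> h <= n -> move_head n h HRight = Some h'.
Proof.
  intros -> H. unfold move_head.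
  replace (h <? S n) with true; [reflexivity | symmetry; apply Nat.ltb_lt; lia].
Qed.
Lemma move_head_left n h h' : h = S h' -> move_head n h HLeft = Some h'.
Proof. intros ->. reflexivity. Qed.
Lemma move_head_stay n h h' : h' = h -> move_head n h HStay = Some h'.
Proof. intros ->. reflexivity. Qed.
Lemma move_det_right n J J' :
  J' = S J -> J < 2 * (n + 1) -> move_det n J 0 DRight = Some (J', 0).
Proof.
  intros -> H. unfold move_det.
  replace (J <? 2 * (n + 1)) with true; [reflexivity | symmetry; apply Nat.ltb_lt; lia].
Qed.
Lemma move_det_left n J J' : J = S J' -> move_det n J 0 DLeft = Some (J', 0).
Proof. intros ->. reflexivity. Qed.
Lemma move_det_stay n J J' : J' = J -> move_det n J 0 DStay = Some (J', 0).
Proof. intros ->. reflexivity. Qed.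

Ltac move_ok :=
  first [ apply move_head_right | apply move_head_left | apply move_head_stay
        | apply move_det_right | apply move_det_left | apply move_det_stay ]; lia.

(* One non-toggling step to head [hd] and detector [det]; [rd] rewrites the
   scanned symbol and the detector output until [sq_delta] computes. *)
Tactic Notation "advance" constr(hd) constr(det) "reading" tactic0(rd) :=
  match goal with Hg : cfg_inv _ _ _ _ _ _ |- _ =>
    eapply reach_noact with (h' := hd) (J' := det);
    [ exact Hg | first [reflexivity | assumption] | rd; reflexivity | move_ok | move_ok | lia
    | clear Hg; intros ?cf Hg ]
  end.

Tactic Notation "then_phase" tactic0(tac) :=
  match goal with Hg : cfg_inv _ _ _ _ _ _ |- _ =>
    eapply reach_cont; [tac | lia | clear Hg; intros ?cf Hg; cbv beta in Hg]
  end.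

Definition in_range (lo hi m : nat) : bool := (lo <=? m) && (m <=? hi).

Ltac bool_arith :=
  intros; unfold upd, in_range in *; cbn [kcrash sq_oia];
  repeat match goal with
  | |- context [Nat.eqb ?a ?b] => destruct (Nat.eqb_spec a b)
  | |- context [Nat.leb ?a ?b] => destruct (Nat.leb_spec a b)
  end; simpl; try reflexivity; lia.

Lemma word_shape w : exists p q v,
  w = repeat sa p ++ repeat sb q ++ v /\ (v = [] \/ 1 <= q /\ exists v', v = sa :: v').
Proof.
  induction w as [|x w IH].
  - exists 0, 0, []. auto.
  - destruct IH as (p & q & v & Hw & Hv). destruct x.
    + exists (S p), q, v. simpl. rewrite Hw. auto.
    + destruct p as [|p].
      * exists 0, (S q), v. simpl in *. rewrite Hw. split; [reflexivity|].
        destruct Hv as [|(_ & Hv)]; auto. right; split; [lia | exact Hv].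
      * exists 0, 1, w. split; [reflexivity|]. right; split; [lia|]. rewrite Hw. simpl. eauto.
Qed.

Lemma repeat_ab_inj p q k m :
  repeat sa p ++ repeat sb q = repeat sa k ++ repeat sb m -> p = k /\ q = m.
Proof.
  revert k; induction p as [|p IH]; intros [|k] H; simpl in H.
  - split; [reflexivity|]. apply (f_equal (@length sym)) in H. rewrite !repeat_length in H. exact H.
  - destruct q; discriminate.
  - destruct m; discriminate.
  - injection H as H. destruct (IH k H). auto.
Qed.

Lemma repeat_ab_neq_aba p q k m v :
  1 <= q -> repeat sa k ++ repeat sb m <> repeat sa p ++ repeat sb q ++ sa :: v.
Proof.
  intros Hq. revert k; induction p as [|p IH]; intros [|k] H; simpl in H.
  - assert (Hin : In sa (repeat sb m)) by (rewrite H; apply in_or_app; right; left; reflexivity).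
    apply repeat_spec in Hin. discriminate.
  - destruct q; [lia | discriminate].
  - destruct m; discriminate.
  - injection H as H. exact (IH k H).
Qed.

Lemma L_anbn2_ab p q : L_anbn2 (repeat sa p ++ repeat sb q ++ []) <-> q = p * p.
Proof.
  rewrite app_nil_r. split.
  - intros (k & Hk). apply repeat_ab_inj in Hk. destruct Hk as [-> ->]. reflexivity.
  - intros ->. exists p. reflexivity.
Qed.

Lemma not_L_anbn2_aba p q v : 1 <= q -> ~ L_anbn2 (repeat sa p ++ repeat sb q ++ sa :: v).
Proof. intros Hq (k & Hk). exact (repeat_ab_neq_aba p q k (k * k) v Hq (eq_sym Hk)). Qed.

Lemma nth_repeat_app (x d : sym) k u i :
  nth i (repeat x k ++ u) d = if i <? k then x else nth (i - k) u d.
Proof.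
  revert i; induction k as [|k IH]; intros i; simpl.
  - rewrite Nat.sub_0_r. reflexivity.
  - destruct i; simpl; auto.
Qed.

Lemma tape_S_not_LEnd w h : tape w (S h) <> LEnd.
Proof.
  unfold tape. simpl.
  destruct (match length w with 0 => false | S m' => h <=? m' end); discriminate.
Qed.

Section Tape.
Context {w : list sym} {p q : nat} {v : list sym}.
Hypothesis Hw : w = repeat sa p ++ repeat sb q ++ v.

Lemma length_word : length w = p + q + length v.
Proof. rewrite Hw, !length_app, !repeat_length. lia. Qed.

Lemma tape_a m : 1 <= m <= p -> tape w m = Sym sa.
Proof.
  intros H. unfold tape. pose proof length_word.
  destruct (Nat.eqb_spec m 0); [lia|]. destruct (Nat.leb_spec m (length w)); [|lia].
  rewrite Hw, nth_repeat_app. destruct (Nat.ltb_spec (m - 1) p); [reflexivity | lia].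
Qed.

Lemma tape_b m : p < m <= p + q -> tape w m = Sym sb.
Proof.
  intros H. unfold tape. pose proof length_word.
  destruct (Nat.eqb_spec m 0); [lia|]. destruct (Nat.leb_spec m (length w)); [|lia].
  rewrite Hw, nth_repeat_app. destruct (Nat.ltb_spec (m - 1) p); [lia|].
  rewrite nth_repeat_app. destruct (Nat.ltb_spec (m - 1 - p) q); [reflexivity | lia].
Qed.

Lemma tape_end m : m = p + q + 1 -> tape w m = match v with [] => REnd | y :: _ => Sym y end.
Proof.
  intros ->. unfold tape. pose proof length_word.
  destruct (Nat.eqb_spec (p + q + 1) 0); [lia|].
  destruct v as [|y v'].
  - destruct (Nat.leb_spec (p + q + 1) (length w)); [simpl in *; lia | reflexivity].
  - destruct (Nat.leb_spec (p + q + 1) (length w)); [|simpl in *; lia].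
    rewrite Hw, nth_repeat_app. destruct (Nat.ltb_spec (p + q + 1 - 1) p); [lia|].
    rewrite nth_repeat_app. destruct (Nat.ltb_spec (p + q + 1 - 1 - p) q); [lia|].
    replace (p + q + 1 - 1 - p - q) with 0 by lia. reflexivity.
Qed.

End Tape.

Lemma rewind w (xw xh xn : state) lit tog h (c : config sq_oia) :
  acc sq_oia xw || rej sq_oia xw = false -> acc sq_oia xh || rej sq_oia xh = false ->
  (forall s o, sq_delta xw s o =
     match s with LEnd => (xh, HRight, DRight, NoAct) | _ => (xw, HLeft, DStay, NoAct) end) ->
  (forall s o, sq_delta xh s o = (xn, HStay, DRight, NoAct)) ->
  cfg_inv c xw h 0 lit tog -> reach w c (h + 2) (fun c' => cfg_inv c' xn 1 2 lit tog).
Proof.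
  intros Hxw Hxh Dw Dh. revert c; induction h as [|h IH]; intros c Hg.
  - advance 1 1 reading (rewrite Dw).
    advance 1 2 reading (rewrite Dh).
    apply reach_now, Hg.
  - advance h 0 reading (rewrite Dw; destruct (tape w (S h)) eqn:E;
                          [exfalso; exact (tape_S_not_LEnd w h E) | |]).
    eapply reach_le; [apply IH, Hg | lia].
Qed.

Lemma return_home w lit tog j (c : config sq_oia) :
  cfg_inv c qReturn j (2 * j) lit tog ->
  reach w c (2 * j + 2) (fun c' => cfg_inv c' qRound 1 2 lit tog).
Proof.
  revert c; induction j as [|j IH]; intros c Hg.
  - advance 1 1 reading idtac.
    advance 1 2 reading idtac.
    apply reach_now, Hg.
  - advance j (S (2 * j)) reading (destruct (tape w (S j)) eqn:E;
                                    [exfalso; exact (tape_S_not_LEnd w j E) | |]).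
    advance j (2 * j) reading idtac.
    eapply reach_le; [apply IH, Hg | lia].
Qed.

Section Prescan.
Context {w : list sym} {p q : nat} {v : list sym}.
Hypothesis Hw : w = repeat sa p ++ repeat sb q ++ v.

Lemma scan_a d i (c : config sq_oia) :
  i + d = p + 1 -> 1 <= i ->
  cfg_inv c qScanA i 0 (in_range 1 (i - 1)) (fun m => Nat.b2n (in_range 1 (i - 1) m)) ->
  reach w c d (fun c' =>
    cfg_inv c' qScanA (p + 1) 0 (in_range 1 p) (fun m => Nat.b2n (in_range 1 p m))).
Proof.
  pose proof (length_word Hw). revert i c; induction d as [|d IH]; intros i c Hd Hi Hg.
  - apply reach_now. replace i with (p + 1) in Hg by lia.
    eapply cfg_inv_ext; [exact Hg | |]; bool_arith.
  - eapply reach_toggle with (h' := S i) (J' := 0);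
      [exact Hg | reflexivity | rewrite (tape_a Hw) by lia; reflexivity
      | move_ok | move_ok | lia | bool_arith | lia | clear Hg; intros c' Hg].
    eapply reach_le; [apply (IH (S i)); [lia | lia |] | lia].
    eapply cfg_inv_ext; [exact Hg | |]; bool_arith.
Qed.

Lemma scan_b d i (c : config sq_oia) lit tog :
  i + d = p + q + 1 -> p + 1 < i -> cfg_inv c qScanB i 0 lit tog ->
  reach w c d (fun c' => cfg_inv c' qScanB (p + q + 1) 0 lit tog).
Proof.
  pose proof (length_word Hw). revert i c; induction d as [|d IH]; intros i c Hd Hi Hg.
  - apply reach_now. replace (p + q + 1) with i by lia. exact Hg.
  - advance (S i) 0 reading (rewrite (tape_b Hw) by lia).
    eapply reach_le; [apply (IH (S i)); [lia | lia | exact Hg] | lia].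
Qed.

Lemma scan_input (c0 : config sq_oia) :
  cfg_inv c0 qStart 0 0 (fun _ => false) (fun _ => 0) ->
  reach w c0 (1 + p + q) (fun c => exists x,
    cfg_inv c x (p + q + 1) 0 (in_range 1 p) (fun m => Nat.b2n (in_range 1 p m)) /\
    (x = qScanA /\ q = 0 \/ x = qScanB /\ 1 <= q)).
Proof.
  pose proof (length_word Hw). intros Hg.
  advance 1 0 reading idtac.
  then_phase (apply (scan_a p 1); [lia | lia | eapply cfg_inv_ext; [exact Hg | |]; bool_arith]).
  destruct (Nat.eq_dec q 0) as [Hq | Hq].
  - apply reach_now. exists qScanA. split; [|left; auto].
    replace (p + q + 1) with (p + 1) by lia. exact Hg.
  - advance (p + 2) 0 reading (rewrite (tape_b Hw) by lia).
    eapply reach_weaken; [apply (scan_b (q - 1) (p + 2)); [lia | lia | exact Hg] | lia |].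
    intros c' Hc'. exists qScanB. split; [exact Hc' | right; split; [reflexivity | lia]].
Qed.

Hypothesis Hv : v = [] \/ 1 <= q /\ exists v', v = sa :: v'.

Lemma prescan (c0 : config sq_oia) :
  cfg_inv c0 qStart 0 0 (fun _ => false) (fun _ => 0) ->
  reach w c0 (2 * (p + q) + 6) (fun c =>
    (v = [] /\ cfg_inv c qRound 1 2 (in_range 1 p) (fun m => Nat.b2n (in_range 1 p m))) \/
    (v <> [] /\ rejected c)).
Proof.
  pose proof (length_word Hw). intros Hg0.
  eapply reach_cont; [apply scan_input, Hg0 | lia | clear Hg0; intros c (x & Hg & Hx)].
  destruct Hv as [-> | (Hq & v' & ->)].
  - destruct Hx as [[-> _] | [-> _]];
      advance (p + q) 0 reading (rewrite (tape_end Hw) by lia);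
      (eapply reach_cont;
       [ apply (rewind w qRewind qHome qRound);
         [ reflexivity | reflexivity | intros [| |[]] ?; reflexivity
         | intros; reflexivity | exact Hg ]
       | lia
       | intros c' Hc'; apply reach_now; left; auto ]).
  - destruct Hx as [[_ Hq0] | [-> _]]; [lia|].
    advance (p + q + 1) 0 reading (rewrite (tape_end Hw) by lia).
    apply reach_now. right. split; [discriminate | exact (cfg_inv_rejected Hg)].
Qed.

End Prescan.

(** * Rounds *)

Section Squaring.
Variables (w : list sym) (p q : nat).
Hypothesis Hw : w = repeat sa p ++ repeat sb q ++ [].

Let len_w : length w = p + q.
Proof. rewrite (length_word Hw). simpl. lia. Qed.

Definition lit (r c m : nat) : bool :=
  in_range 1 r m || in_range (p + q - c + 1) (p + q) m.
Definition toggles (r c m : nat) : nat :=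
  if lit r c m then 1 else if in_range 1 p m then 2 else 0.

Local Notation sq_inv cf x h J r c := (cfg_inv cf x h J (lit r c) (toggles r c)).

Ltac lit_arith := unfold toggles, lit; bool_arith.

Ltac read_lit m :=
  match goal with Hg : cfg_inv _ _ _ _ _ _ |- _ =>
    rewrite (output_cfg_inv _ _ _ _ m _ _ Hg) by lia end;
  match goal with |- context [lit ?r ?c ?k] =>
    first [ replace (lit r c k) with true by lit_arith
          | replace (lit r c k) with false by lit_arith ] end.

Lemma reach_mark (cf : config sq_oia) (x x' : state) r c J hm dm h' J' t P :
  sq_inv cf x (p + q - c) J r c -> r <= p -> c < q -> acc sq_oia x || rej sq_oia x = false ->
  sq_delta x (tape w (p + q - c)) (output (length w) cf) = (x', hm, dm, Toggle0) ->
  move_head (length w) (p + q - c) hm = Some h' -> move_det (length w) J 0 dm = Some (J', 0) ->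
  h' <> p + q - c -> 0 < t ->
  (forall cf' : config sq_oia, sq_inv cf' x' h' J' r (S c) -> reach w cf' (t - 1) P) ->
  reach w cf t P.
Proof.
  intros Hg Hr Hc Hx Hd Hmh Hmd Hh' Ht K.
  eapply reach_toggle; [exact Hg | exact Hx | exact Hd | exact Hmh | exact Hmd | exact Hh'
                       | lit_arith | exact Ht |].
  intros cf' Hg'. apply K. eapply cfg_inv_ext; [exact Hg' | |]; lit_arith.
Qed.

Tactic Notation "mark" constr(hd) constr(det) "reading" tactic0(rd) :=
  match goal with Hg : cfg_inv _ _ _ _ _ _ |- _ =>
    eapply reach_mark with (h' := hd) (J' := det);
    [ exact Hg | lia | lia | reflexivity | rd; reflexivity | move_ok | move_ok | lia | lia
    | clear Hg; intros ?cf Hg ]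
  end.

Lemma seek_marked r c d j (cf : config sq_oia) :
  r <= p -> c <= q -> j + d = p + q - c + 1 -> 1 <= j -> sq_inv cf qSeek j (2 * j) r c ->
  reach w cf (2 * d + 2) (fun cf' => sq_inv cf' qCheckB (p + q - c) (2 * (p + q - c)) r c).
Proof.
  intros Hr Hc. revert j cf; induction d as [|d IH]; intros j cf Hd Hj Hg.
  - advance (p + q - c) (S (2 * (p + q - c))) reading
      (destruct (Nat.eq_dec c 0);
       [rewrite (tape_end Hw) by lia | rewrite (tape_b Hw) by lia; read_lit j]).
    advance (p + q - c) (2 * (p + q - c)) reading idtac.
    apply reach_now, Hg.
  - advance (S j) (S (2 * j)) reading
      (destruct (le_lt_dec j p);
       [rewrite (tape_a Hw) by lia | rewrite (tape_b Hw) by lia; read_lit j]).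
    advance (S j) (2 * S j) reading idtac.
    eapply reach_le; [apply (IH (S j)); [lia | lia | exact Hg] | lia].
Qed.

Lemma find_top_lit R c d j (cf : config sq_oia) :
  1 <= R <= p -> c < q -> j = R + d -> j <= p + q - c ->
  sq_inv cf qFind (p + q - c) (2 * j) R c ->
  reach w cf (2 * d) (fun cf' => sq_inv cf' qFind (p + q - c) (2 * R) R c).
Proof.
  intros HR Hc. revert j cf; induction d as [|d IH]; intros j cf Hd Hj Hg.
  - apply reach_now. replace (2 * R) with (2 * j) by lia. exact Hg.
  - advance (p + q - c) (S (2 * (j - 1))) reading (read_lit j).
    advance (p + q - c) (2 * (j - 1)) reading idtac.
    eapply reach_le; [apply (IH (j - 1)); [lia | lia | exact Hg] | lia].
Qed.

Lemma mark_first R c (cf : config sq_oia) :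
  1 <= R <= p -> c < q -> sq_inv cf qFind (p + q - c) (2 * R) R c ->
  reach w cf 3 (fun cf' => sq_inv cf' qCount (p + q - S c) (2 * (R - 1)) R (S c)).
Proof.
  intros HR Hc Hg.
  mark (p + q - S c) (2 * R) reading (read_lit R; rewrite (tape_b Hw) by lia).
  advance (p + q - S c) (S (2 * (R - 1))) reading idtac.
  advance (p + q - S c) (2 * (R - 1)) reading idtac.
  apply reach_now, Hg.
Qed.

Lemma count_down R j c (cf : config sq_oia) :
  1 <= R <= p -> j < R -> c <= q -> sq_inv cf qCount (p + q - c) (2 * j) R c ->
  reach w cf (4 * j + 1) (fun cf' =>
    (c + 2 * j <= q /\ sq_inv cf' qRewind2 (p + q - (c + 2 * j)) 0 R (c + 2 * j)) \/
    (q < c + 2 * j /\ rejected cf')).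
Proof.
  intros HR. revert c cf; induction j as [|j IH]; intros c cf Hj Hc Hg.
  - advance (p + q - c) 0 reading (read_lit 0).
    apply reach_now. left. rewrite Nat.add_0_r. split; [exact Hc | exact Hg].
  - destruct (Nat.eq_dec c q) as [-> | Hcq].
    + advance (p + q - q) (2 * S j) reading (read_lit (S j); rewrite (tape_a Hw) by lia).
      apply reach_now. right. split; [lia | exact (cfg_inv_rejected Hg)].
    + mark (p + q - S c) (2 * S j) reading (read_lit (S j); rewrite (tape_b Hw) by lia).
      destruct (Nat.eq_dec (S c) q) as [Hq | Hq].
      * advance (p + q - S c) (2 * S j) reading (rewrite (tape_a Hw) by lia).
        apply reach_now. right. split; [lia | exact (cfg_inv_rejected Hg)].
      * mark (p + q - S (S c)) (2 * S j) reading (rewrite (tape_b Hw) by lia).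
        advance (p + q - S (S c)) (S (2 * j)) reading idtac.
        advance (p + q - S (S c)) (2 * j) reading idtac.
        replace (c + 2 * S j) with (S (S c) + 2 * j) by lia.
        eapply reach_le; [apply (IH (S (S c))); [lia | lia | exact Hg] | lia].
Qed.

Lemma locate_top_lit R c d j (cf : config sq_oia) :
  1 <= R <= p -> c <= q -> j + d = R + 1 -> 1 <= j -> sq_inv cf qLocate j (2 * j) R c ->
  reach w cf (2 * d + 2) (fun cf' => sq_inv cf' qUnmark R (2 * R) R c).
Proof.
  intros HR Hc. revert j cf; induction d as [|d IH]; intros j cf Hd Hj Hg.
  - advance R (S (2 * R)) reading
      (destruct (le_lt_dec j p);
       [ rewrite (tape_a Hw) by lia; read_lit j
       | destruct (Nat.eq_dec q 0); [rewrite (tape_end Hw) by lia | rewrite (tape_b Hw) by lia]]).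
    advance R (2 * R) reading idtac.
    apply reach_now, Hg.
  - advance (S j) (S (2 * j)) reading (rewrite (tape_a Hw) by lia; read_lit j).
    advance (S j) (2 * S j) reading idtac.
    eapply reach_le; [apply (IH (S j)); [lia | lia | exact Hg] | lia].
Qed.

Lemma unmark_top R c (cf : config sq_oia) :
  1 <= R <= p -> c <= q -> sq_inv cf qUnmark R (2 * R) R c ->
  reach w cf 2 (fun cf' => sq_inv cf' qReturn (R - 1) (2 * (R - 1)) (R - 1) c).
Proof.
  intros HR Hc Hg.
  eapply reach_toggle with (h' := R - 1) (J' := S (2 * (R - 1)));
    [ exact Hg | reflexivity | reflexivity | move_ok | move_ok | lia | lit_arith | lia
    | clear Hg; intros cf' Hg ].
  advance (R - 1) (2 * (R - 1)) reading idtac.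
  apply reach_now. eapply cfg_inv_ext; [exact Hg | |]; lit_arith.
Qed.

Lemma round_mark R c (cf : config sq_oia) :
  1 <= R <= p -> c <= q -> sq_inv cf qRound 1 2 R c ->
  reach w cf (8 * (p + q + 1)) (fun cf' =>
    (c + 2 * R - 1 <= q /\ sq_inv cf' qRewind2 (p + q - (c + 2 * R - 1)) 0 R (c + 2 * R - 1)) \/
    (q < c + 2 * R - 1 /\ rejected cf')).
Proof.
  intros HR Hc Hg.
  advance 1 2 reading (read_lit 1).
  then_phase (apply (seek_marked R c (p + q - c) 1); [lia | lia | lia | lia | exact Hg]).
  destruct (Nat.eq_dec c q) as [-> | Hcq].
  - advance (p + q - q) (2 * (p + q - q)) reading (rewrite (tape_a Hw) by lia).
    apply reach_now. right. split; [lia | exact (cfg_inv_rejected Hg)].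
  - advance (p + q - c) (2 * (p + q - c)) reading (rewrite (tape_b Hw) by lia).
    then_phase (apply (find_top_lit R c (p + q - c - R) (p + q - c));
                [lia | lia | lia | lia | exact Hg]).
    then_phase (apply (mark_first R c); [lia | lia | exact Hg]).
    replace (c + 2 * R - 1) with (S c + 2 * (R - 1)) by lia.
    eapply reach_le; [apply count_down; [lia | lia | lia | exact Hg] | lia].
Qed.

Lemma round_unmark R c h (cf : config sq_oia) :
  1 <= R <= p -> c <= q -> h <= p + q -> sq_inv cf qRewind2 h 0 R c ->
  reach w cf (8 * (p + q + 1)) (fun cf' => sq_inv cf' qRound 1 2 (R - 1) c).
Proof.
  intros HR Hc Hh Hg.
  then_phase (apply (rewind w qRewind2 qLocateD qLocate);
              [ reflexivity | reflexivity | intros [| |[]] ?; reflexivity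
              | intros; reflexivity | exact Hg ]).
  then_phase (apply (locate_top_lit R c R 1); [lia | lia | lia | lia | exact Hg]).
  then_phase (apply (unmark_top R c); [lia | lia | exact Hg]).
  eapply reach_le; [apply return_home, Hg | lia].
Qed.

Lemma round_step R c (cf : config sq_oia) :
  1 <= R <= p -> c <= q -> sq_inv cf qRound 1 2 R c ->
  reach w cf (16 * (p + q + 1)) (fun cf' =>
    (c + 2 * R - 1 <= q /\ sq_inv cf' qRound 1 2 (R - 1) (c + 2 * R - 1)) \/
    (q < c + 2 * R - 1 /\ rejected cf')).
Proof.
  intros HR Hc Hg.
  eapply reach_cont; [apply round_mark; eassumption | lia | intros cf' [[Hle Hg'] | Hrej]].
  - eapply reach_weaken;
      [ apply (round_unmark R (c + 2 * R - 1) (p + q - (c + 2 * R - 1)));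
        [lia | lia | lia | exact Hg']
      | lia |].
    intros cf'' Hg''. left. auto.
  - apply reach_now. right. exact Hrej.
Qed.

Lemma verify_marked c d j (cf : config sq_oia) :
  c <= q -> j + d = p + q + 1 -> 1 <= j -> (c < q -> j <= p + q - c) ->
  sq_inv cf qVerify j (2 * j) 0 c ->
  reach w cf (2 * d + 1) (fun cf' => (c = q /\ accepted w cf') \/ (c < q /\ rejected cf')).
Proof.
  intros Hc. revert j cf; induction d as [|d IH]; intros j cf Hd Hj Hpre Hg.
  - advance j (2 * j) reading (rewrite (tape_end Hw) by lia).
    apply reach_now. left. split; [lia|].
    split; [apply Hg | split; [read_lit j; reflexivity | exact (cfg_inv_no_final_crash Hg)]].
  - destruct (le_lt_dec j p) as [Hjp | Hjp]; [|destruct (le_lt_dec j (p + q - c)) as [Hjc | Hjc]].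
    + advance (S j) (S (2 * j)) reading (rewrite (tape_a Hw) by lia).
      advance (S j) (2 * S j) reading idtac.
      eapply reach_le; [apply (IH (S j)); [lia | lia | lia | exact Hg] | lia].
    + advance j (2 * j) reading (rewrite (tape_b Hw) by lia; read_lit j).
      apply reach_now. right. split; [lia | exact (cfg_inv_rejected Hg)].
    + advance (S j) (S (2 * j)) reading (rewrite (tape_b Hw) by lia; read_lit j).
      advance (S j) (2 * S j) reading idtac.
      eapply reach_le; [apply (IH (S j)); [lia | lia | lia | exact Hg] | lia].
Qed.

Definition verdict (cf : config sq_oia) : Prop :=
  (q = p * p /\ accepted w cf) \/ (q <> p * p /\ rejected cf).

Lemma all_rounds r c (cf : config sq_oia) :
  r <= p -> c <= q -> c + r * r = p * p -> sq_inv cf qRound 1 2 r c ->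
  reach w cf ((r + 1) * (16 * (p + q + 1))) verdict.
Proof.
  revert c cf; induction r as [|r IH]; intros c cf Hr Hc Hcr Hg.
  - assert (Hc0 : c = 0 \/ 1 <= p) by nia.
    advance 1 2 reading (read_lit 1).
    eapply reach_weaken;
      [apply (verify_marked c (p + q) 1); [lia | lia | lia | lia | exact Hg] | lia |].
    intros cf' [[Hcq Hacc] | [Hcq Hrej]]; [left | right]; split; auto; lia.
  - eapply reach_cont; [apply (round_step (S r) c cf); [lia | lia | exact Hg] | nia
                       | clear Hg; intros cf' [[Hle Hg] | [Hgt Hrej]]].
    + replace (S r - 1) with r in Hg by lia.
      eapply reach_le; [apply (IH (c + 2 * S r - 1)); [lia | lia | nia | exact Hg] | nia].
    + apply reach_now. right. split; [nia | exact Hrej].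
Qed.

End Squaring.

Lemma accepted_decides w (b : Prop) c : accepted w c -> b -> halted c = true /\ decides w b c.
Proof.
  intros (Hst & Ho & Hn) Hb. unfold halted. rewrite Hst.
  split; [reflexivity|]. split; [exact Hn|]. split; [|contradiction].
  intros _. simpl. rewrite Hst. auto.
Qed.

Lemma rejected_decides w (b : Prop) c : rejected c -> ~ b -> halted c = true /\ decides w b c.
Proof.
  intros (Hst & Hn) Hb. unfold halted. rewrite Hst.
  split; [reflexivity|]. split; [exact Hn|]. split; [contradiction|].
  intros _. left. simpl. rewrite Hst. reflexivity.
Qed.

Lemma sq_decides w : exists c : config sq_oia,
  final w c /\ time c <= 2 * (2 * length w + 6 + (length w + 1) * (16 * (length w + 1))) /\
  decides w (L_anbn2 w) c.
Proof.
  destruct (word_shape w) as (p & q & v & Hw & Hv).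
  destruct (init_cfg_inv w) as (c0 & H0 & Hg).
  pose proof (length_word Hw) as Hl.
  apply (final_of_reach w c0 _ _ H0).
  eapply reach_cont; [apply (prescan Hw Hv), Hg | lia | clear Hg; intros c [[-> Hg] | [Hnv Hrej]]].
  - pose proof (L_anbn2_ab p q) as HL. rewrite <- Hw in HL.
    eapply reach_weaken; [apply (all_rounds w p q Hw p 0 c); [lia | lia | lia |] | |].
    + eapply cfg_inv_ext; [exact Hg | |]; unfold toggles, lit; bool_arith.
    + simpl in Hl. nia.
    + intros c' [[Hq Hacc] | [Hq Hrej]].
      * apply accepted_decides; [exact Hacc | apply HL, Hq].
      * apply rejected_decides; [exact Hrej | rewrite HL; exact Hq].
  - destruct Hv as [-> | (Hq & v' & ->)]; [contradiction|].
    apply reach_now, rejected_decides; [exact Hrej|]. rewrite Hw. apply not_L_anbn2_aba, Hq.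
Qed.

Theorem theorem6 :
  exists M : OIA,
    recognizes M L_anbn2 /\
    exists C N : nat, forall w : list sym,
      N <= length w -> runs_within M w (C * length w ^ 3).
Proof.
  exists sq_oia. split.
  - apply recognizes_of_decides. intros w.
    destruct (sq_decides w) as (c & Hf & _ & Hd). exists c. auto.
  - exists 144, 1. intros w Hn.
    destruct (sq_decides w) as (c & Hf & Ht & _). exists c. split; [exact Hf|].
    simpl. nia.
Qed.
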